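(* Let $\{B_i\}_{i \in I}$ be a finite family of subsets of an $n$-element set $\Omega$, let $m \in \{0,\dots,\lfloor n/2\rfloor\}$, let $R$ be a uniformly chosen random $m$-element subset of $\Omega$, and let $\mathcal{B}$ be the event that $B_i \not\subseteq R$ for all $i \in I$. Then for every $\eta \in (0,1)$, \[ \Pr(\mathcal{B}) \ge \prod_{i \in I}\left(1 - \left(\frac{(1+\eta)m}{n}\right)^{|B_i|}\right) - \exp(-\eta^2 m/4). \] *)

From HB Require Import structures.
From mathcomp Require Import all_boot all_order all_algebra.
From mathcomp Require Import all_classical all_reals all_analysis.
Set Implicit Arguments. Unset Strict Implicit. Unset Printing Implicit Defensive.
Import Order.TTheory GRing.Theory Num.Theory.
Local Open Scope ring_scope.

Definition msubsets (Omega : finType) (m : nat) : {set {set Omega}} :=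
  [set S : {set Omega} | #|S| == m].

Definition unif_prob (Rr : realType) (Omega : finType) (m : nat)
    (E : pred {set Omega}) : Rr :=
  #|[set S in msubsets Omega m | E S]|%:R / #|msubsets Omega m|%:R.

Definition avoid_all (Omega I : finType) (B : I -> {set Omega})
    : pred {set Omega} :=
  fun S => [forall i, ~~ (B i \subset S)].

From HB Require Import structures.
From mathcomp Require Import all_boot all_order all_algebra.
From mathcomp Require Import all_classical all_reals all_analysis.
From mathcomp Require Import ring lra zify.
Import Order.TTheory GRing.Theory Num.Theory numFieldNormedType.Exports.
Local Open Scope ring_scope.

(* Compare the uniform m-subset with the random set S containing each point
   independently with probability p = (1 + eta) m / n.  The event "S avoids every
   B_i" is decreasing, so Harris' inequality gives P_p(avoid) >= prod_i
   (1 - p^|B_i|).  Given |S| = k, S is a uniform k-subset, and for a decreasing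
   event this conditional probability is nonincreasing in k (double counting);
   hence P_p(avoid) <= P_p(|S| < m) + P(R avoids).  Finally the Chernoff bound
   with parameter t = exp(-eta/2) gives P_p(|S| < m) <= exp(-eta^2 m / 4). *)

Lemma expR_ge1DxDsqr {R : realType} (x : R) :
  0 <= x -> 1 + x + x ^+ 2 / 2 <= expR x.
Proof.
move=> x_ge0; have [->|x_neq0] := eqVneq x 0; first by rewrite expR0; lra.
have x_gt0 : 0 < x by rewrite lt_def x_neq0.
pose f (y : R) := expR y - y ^+ 2 / 2.
have df y : is_derive y (1 : R) f (expR y - y).
  by apply: is_derive_eq; rewrite !scaler0 add0r /GRing.scale /= !mulr1; lra.
have [|c /[!in_itv]/= /andP[c_gt0 _] fxE] := MVT x_gt0 (fun y _ => df y).
  apply: continuous_subspaceT => z; apply: differentiable_continuous.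
  by apply/derivable1_diffP; have [] := df z.
have := expR_ge1Dx c; move: fxE; rewrite /f expR0 expr0n /= subr0; nra.
Qed.

Lemma one_sub_expRN_ge {R : realType} (u : R) :
  0 <= u -> u - u ^+ 2 / 2 <= 1 - expR (- u).
Proof.
move=> u_ge0; set q := 1 + u + u ^+ 2 / 2.
have q_gt0 : 0 < q by rewrite /q; nra.
have expRNq : expR (- u) <= q^-1.
  by rewrite expRN lef_pV2 ?posrE ?expR_gt0 // expR_ge1DxDsqr.
suff : q^-1 <= 1 - u + u ^+ 2 / 2 by lra.
by rewrite -[q^-1]mulr1 ler_pdivrMl // /q; nra.
Qed.

Lemma prodr_indicator (R : comPzSemiRingType) (I : finType) (P : pred I) :
  \prod_(i : I) (P i)%:R = [forall i, P i]%:R :> R.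
Proof.
have [/forallP allP|/forallPn [i notPi]] := boolP [forall i, P i].
  by rewrite big1 // => i _; rewrite allP.
by rewrite (bigD1 i) //= (negbTE notPi) mul0r.
Qed.

Section BernoulliSubset.
Context {R : realType} {T : finType} (p : R).
Implicit Types (s : seq T) (S : {set T}) (h f g : {set T} -> R).

(* [Ebin p s h] is the expectation of [h S] for the random set [S] containing
   each element of [s] independently with probability [p], and nothing else. *)
Fixpoint Ebin s h : R :=
  if s is x :: s' then p * Ebin s' (fun S => h (x |: S)) + (1 - p) * Ebin s' h
  else h finset.set0.

Lemma eq_Ebin s h1 h2 : h1 =1 h2 -> Ebin s h1 = Ebin s h2.
Proof.
elim: s h1 h2 => [|x s IH] h1 h2 eq_h /=; first exact: eq_h.
by rewrite (IH _ (fun S => h2 (x |: S))) // (IH h1 h2).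
Qed.

Lemma Ebin_cst s c : Ebin s (fun _ => c) = c.
Proof. by elim: s => [|x s IH] //=; rewrite IH; ring. Qed.

Lemma EbinD s h1 h2 : Ebin s (fun S => h1 S + h2 S) = Ebin s h1 + Ebin s h2.
Proof.
elim: s h1 h2 => [|x s IH] h1 h2 //=.
by rewrite (IH (fun S => h1 (x |: S))) IH; ring.
Qed.

Lemma EbinB s h1 h2 : Ebin s (fun S => h1 S - h2 S) = Ebin s h1 - Ebin s h2.
Proof.
elim: s h1 h2 => [|x s IH] h1 h2 //=.
by rewrite (IH (fun S => h1 (x |: S))) IH; ring.
Qed.

Lemma EbinZ s c h : Ebin s (fun S => c * h S) = c * Ebin s h.
Proof.
elim: s h => [|x s IH] h //=.
by rewrite (IH (fun S => h (x |: S))) IH; ring.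
Qed.

Lemma Ebin_sum s (J : Type) (r : seq J) (F : J -> {set T} -> R) :
  Ebin s (fun S => \sum_(j <- r) F j S) = \sum_(j <- r) Ebin s (F j).
Proof.
elim: r => [|j r IH].
  by rewrite big_nil (@eq_Ebin _ _ (fun _ => 0)) ?Ebin_cst // => S; rewrite big_nil.
rewrite big_cons -IH -EbinD; apply: eq_Ebin => S; exact: big_cons.
Qed.

Lemma Ebin_prod_seq s (F : T -> bool -> R) : uniq s ->
  Ebin s (fun S => \prod_y F y (y \in S)) =
  \prod_y (if y \in s then p * F y true + (1 - p) * F y false else F y false).
Proof.
elim: s F => [|x s IH] F /=.
  by move=> _; apply: eq_bigr => y _; rewrite finset.in_set0.
case/andP=> x_notin_s uniq_s.
pose Fx y b := if y == x then F y true else F y b.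
rewrite (@eq_Ebin _ _ (fun S => \prod_y Fx y (y \in S))); last first.
  by move=> S; apply: eq_bigr => y _; rewrite finset.in_setU1 /Fx; case: eqP.
rewrite !IH // (bigD1 x) //= [X in _ + _ * X](bigD1 x) //= [RHS](bigD1 x) //=.
rewrite /Fx eqxx (negbTE x_notin_s) mem_head.
have -> : \prod_(y | y != x) (if y \in s then p * Fx y true + (1 - p) * Fx y false
                                 else Fx y false) =
          \prod_(y | y != x) (if y \in s then p * F y true + (1 - p) * F y false
                                 else F y false).
  by apply: eq_bigr => y /negbTE y_neq_x; rewrite /Fx y_neq_x.
rewrite [in RHS](eq_bigr (fun y => if y \in s then p * F y true + (1 - p) * F y false
                                   else F y false)); first by ring.
by move=> y /negbTE y_neq_x; rewrite in_cons y_neq_x.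
Qed.

Lemma Ebin_prod (F : T -> bool -> R) :
  Ebin (enum T) (fun S => \prod_y F y (y \in S)) =
  \prod_y (p * F y true + (1 - p) * F y false).
Proof.
by rewrite Ebin_prod_seq ?enum_uniq //; apply: eq_bigr => y _; rewrite mem_enum.
Qed.

Lemma Ebin_subset (B : {set T}) :
  Ebin (enum T) (fun S => (B \subset S)%:R) = p ^+ #|B|.
Proof.
rewrite (@eq_Ebin _ _ (fun S => \prod_y ((y \in B) ==> (y \in S))%:R)); last first.
  move=> S; rewrite prodr_indicator; congr (nat_of_bool _)%:R.
  exact/fintype.subsetP/forall_inP.
rewrite (Ebin_prod (fun y b => ((y \in B) ==> b)%:R)) -prodr_const [RHS]big_mkcond.
by apply: eq_bigr => y _; case: (y \in B) => /=; ring.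
Qed.

Lemma Ebin_exp_card (t : R) :
  Ebin (enum T) (fun S => t ^+ #|S|) = (p * t + (1 - p)) ^+ #|T|.
Proof.
rewrite (@eq_Ebin _ _ (fun S => \prod_y (if y \in S then t else 1))); last first.
  by move=> S; rewrite -big_mkcond prodr_const.
rewrite (Ebin_prod (fun _ b => if b then t else 1)) -prodr_const.
by apply: eq_bigr => y _; ring.
Qed.

Lemma Ebin_pred1 (S0 : {set T}) :
  Ebin (enum T) (fun S => (S == S0)%:R) = p ^+ #|S0| * (1 - p) ^+ (#|T| - #|S0|).
Proof.
rewrite (@eq_Ebin _ _ (fun S => \prod_y ((y \in S) == (y \in S0))%:R)); last first.
  move=> S; rewrite prodr_indicator; congr (nat_of_bool _)%:R.
  by apply/eqP/forallP => [-> y|eqS]; [exact: eqxx | apply/finset.setP => y; exact/eqP].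
rewrite (Ebin_prod (fun y b => (b == (y \in S0))%:R)) (bigID (mem S0)) /=.
rewrite -(cardsC S0) addKn -!prodr_const.
congr (_ * _); first by apply: eq_bigr => y ->; rewrite !eqE /=; ring.
apply: eq_big => [y|y /negbTE ->]; first by rewrite finset.in_setC.
by rewrite !eqE /=; ring.
Qed.

Lemma Ebin_expand h :
  Ebin (enum T) h = \sum_(S : {set T}) p ^+ #|S| * (1 - p) ^+ (#|T| - #|S|) * h S.
Proof.
rewrite (@eq_Ebin _ _ (fun S => \sum_S0 h S0 * (S == S0)%:R)); last first.
  move=> S; rewrite (bigD1 S) //= eqxx mulr1 big1 ?addr0 // => S0 /negbTE ne.
  by rewrite eq_sym ne mulr0.
by rewrite Ebin_sum; apply: eq_bigr => S0 _; rewrite EbinZ Ebin_pred1 mulrC.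
Qed.

Definition decreasing h := forall S S', S \subset S' -> h S' <= h S.

Hypotheses (p_ge0 : 0 <= p) (p_le1 : p <= 1).

Lemma ler_Ebin s h1 h2 : (forall S, h1 S <= h2 S) -> Ebin s h1 <= Ebin s h2.
Proof.
have q_ge0 : 0 <= 1 - p by rewrite subr_ge0.
elim: s h1 h2 => [|x s IH] h1 h2 le_h /=; first exact: le_h.
by apply: lerD; apply: ler_wpM2l => //; apply: IH.
Qed.

Lemma Ebin_ge0 s h : (forall S, 0 <= h S) -> 0 <= Ebin s h.
Proof. by move=> h_ge0; rewrite -(Ebin_cst s 0); apply: ler_Ebin. Qed.

Lemma Ebin_harris s f g : decreasing f -> decreasing g ->
  Ebin s f * Ebin s g <= Ebin s (fun S => f S * g S).
Proof.
elim: s f g => [|x s IH] f g df dg //=.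
have dx h : decreasing h -> decreasing (fun S => h (x |: S)).
  by move=> dh S S' sub; apply/dh/finset.setUS.
have le_x h : decreasing h -> Ebin s (fun S => h (x |: S)) <= Ebin s h.
  by move=> dh; apply: ler_Ebin => S; apply/dh/finset.subsetUr.
have := IH _ _ (dx _ df) (dx _ dg); have := IH _ _ df dg.
have := le_x _ df; have := le_x _ dg.
set a1 := Ebin s (fun S => f (x |: S)); set a0 := Ebin s f.
set b1 := Ebin s (fun S => g (x |: S)); set b0 := Ebin s g.
move=> le_b le_a le0 le1.
have gap : p * (a1 * b1) + (1 - p) * (a0 * b0)
    - (p * a1 + (1 - p) * a0) * (p * b1 + (1 - p) * b0)
    = p * (1 - p) * ((a0 - a1) * (b0 - b1)) by ring.
apply: (@le_trans _ _ (p * (a1 * b1) + (1 - p) * (a0 * b0))).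
  by rewrite -subr_ge0 gap !mulr_ge0 ?subr_ge0.
by apply: lerD; apply: ler_wpM2l; rewrite ?subr_ge0.
Qed.

Lemma Ebin_prod_harris s (J : Type) (r : seq J) (f : J -> {set T} -> R) :
  (forall j, decreasing (f j)) -> (forall j S, 0 <= f j S) ->
  \prod_(j <- r) Ebin s (f j) <= Ebin s (fun S => \prod_(j <- r) f j S).
Proof.
move=> df f_ge0; elim: r => [|j r IH].
  by rewrite big_nil (@eq_Ebin _ _ (fun _ => 1)) ?Ebin_cst // => S; rewrite big_nil.
rewrite big_cons [leRHS](@eq_Ebin _ _ (fun S => f j S * \prod_(i <- r) f i S));
  last by move=> S; exact: big_cons.
have dprod : decreasing (fun S => \prod_(i <- r) f i S).
  by move=> S S' sub; apply: ler_prod => i _; rewrite f_ge0 df.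
apply: le_trans (Ebin_harris _ _ _ (df j) dprod).
by apply: ler_wpM2l => //; apply: Ebin_ge0.
Qed.

Lemma Ebin_avoid_all (I : finType) (B : I -> {set T}) :
  \prod_i (1 - p ^+ #|B i|) <= Ebin (enum T) (fun S => (avoid_all B S)%:R).
Proof.
rewrite (@eq_Ebin _ _ (fun S => \prod_i (~~ (B i \subset S))%:R)); last first.
  by move=> S; rewrite prodr_indicator.
have -> : \prod_i (1 - p ^+ #|B i|) =
          \prod_i Ebin (enum T) (fun S => (~~ (B i \subset S))%:R).
  apply: eq_bigr => i _.
  rewrite -Ebin_subset -{1}(Ebin_cst (enum T) 1) -EbinB; apply: eq_Ebin => S.
  by case: (B i \subset S) => /=; ring.
apply: Ebin_prod_harris => // i S S' sub.
have [BS|_] := boolP (B i \subset S); last by case: (B i \subset S').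
by rewrite (fintype.subset_trans BS sub).
Qed.

Lemma Ebin_card_lt (t : R) (m : nat) : 0 < t -> t <= 1 ->
  Ebin (enum T) (fun S => (#|S| < m)%:R) <= (p * t + (1 - p)) ^+ #|T| / t ^+ m.
Proof.
move=> t_gt0 t_le1; have tm_gt0 : 0 < t ^+ m by apply: exprn_gt0.
apply: (@le_trans _ _ (Ebin (enum T) (fun S => (t ^+ m)^-1 * t ^+ #|S|))).
  apply: ler_Ebin => S; case: ltnP => [lt_Sm|_] /=.
    rewrite mulr1n mulrC ler_pdivlMr // mul1r.
    by apply: ler_wiXn2l; [exact: ltW | | exact: ltnW].
  by rewrite mulr0n mulr_ge0 ?invr_ge0 ?exprn_ge0 ?ltW.
by rewrite EbinZ Ebin_exp_card mulrC.
Qed.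

End BernoulliSubset.

Section Layers.
Context {R : realType} {T : finType}.
Implicit Types (S : {set T}) (h : {set T} -> R).

Definition layer h k : R := \sum_(S : {set T} | #|S| == k) h S.

Lemma sum_layers h : \sum_(S : {set T}) h S = \sum_(k < #|T|.+1) layer h k.
Proof.
rewrite (partition_big (fun S : {set T} => inord #|S| : 'I_#|T|.+1) xpredT) //=.
apply: eq_bigr => k _; apply: eq_bigl => S.
by rewrite -val_eqE /= inordK // ltnS max_card.
Qed.

Lemma Ebin_layers (p : R) h :
  Ebin p (enum T) h = \sum_(k < #|T|.+1) p ^+ k * (1 - p) ^+ (#|T| - k) * layer h k.
Proof.
rewrite Ebin_expand sum_layers; apply: eq_bigr => k _.
by rewrite /layer mulr_sumr; apply: eq_bigr => S /eqP ->.
Qed.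

Lemma layer_indicator (P : pred {set T}) k :
  layer (fun S => (P S)%:R) k = #|[set S : {set T} | #|S| == k & P S]|%:R.
Proof.
rewrite /layer (eq_bigr (fun S => if P S then 1 else 0)); last by move=> S _; case: (P S).
by rewrite -big_mkcondr -sumr_const; apply: eq_bigl => S; rewrite finset.inE.
Qed.

Lemma sum_card_succ_setD1 h k (x : T) :
  \sum_(S : {set T} | (#|S| == k.+1) && (x \in S)) h (S :\ x) =
  \sum_(S : {set T} | (#|S| == k) && (x \in ~: S)) h S.
Proof.
rewrite (reindex_onto (fun S => x |: S) (fun S => S :\ x)); last first.
  by move=> S /andP[_ xS]; rewrite finset.setD1K.
apply: eq_big => S; last by move=> /andP[_ /eqP ->].
rewrite finset.in_setC; have [xS|xS] := boolP (x \in S).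
  suff -> : ((x |: S) :\ x == S) = false by rewrite !andbF.
  by apply/negbTE/eqP => eqS; have := finset.setD11 x (x |: S); rewrite eqS xS.
by rewrite finset.setU1K // eqxx finset.setU11 finset.cardsU1 xS !andbT.
Qed.

(* Double counting the pairs (S, x) with x in S and |S| = k + 1. *)
Lemma layer_succ_le h k : decreasing h -> (k < #|T|)%N ->
  k.+1%:R * layer h k.+1 <= (#|T| - k)%:R * layer h k.
Proof.
move=> dh lt_kT; rewrite /layer !mulr_sumr.
have -> : \sum_(S : {set T} | #|S| == k.+1) k.+1%:R * h S =
          \sum_(S : {set T} | #|S| == k.+1) \sum_(x in S) h S.
  by apply: eq_bigr => S /eqP cardS; rewrite sumr_const cardS mulr_natl.
have -> : \sum_(S : {set T} | #|S| == k) (#|T| - k)%:R * h S =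
          \sum_(S : {set T} | #|S| == k) \sum_(x in ~: S) h S.
  apply: eq_bigr => S /eqP cardS.
  by rewrite sumr_const mulr_natl -(cardsC S) cardS addKn.
apply: (@le_trans _ _ (\sum_(S : {set T} | #|S| == k.+1) \sum_(x in S) h (S :\ x))).
  by apply: ler_sum => S _; apply: ler_sum => x _; apply/dh/finset.subD1set.
rewrite (exchange_big_dep xpredT) //= [leRHS](exchange_big_dep xpredT) //=.
by apply: ler_sum => x _; rewrite sum_card_succ_setD1.
Qed.

Lemma layer_binom_le h m k : decreasing h -> (m <= k <= #|T|)%N ->
  'C(#|T|, m)%:R * layer h k <= 'C(#|T|, k)%:R * layer h m.
Proof.
move=> dh /andP[le_mk]; rewrite -(subnKC le_mk); elim: (k - m)%N => [|d IH] le_T.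
  by rewrite addn0 mulrC.
rewrite addnS in le_T *; set j := (m + d)%N in le_T IH *.
have binS : j.+1%:R * 'C(#|T|, j.+1)%:R = (#|T| - j)%:R * 'C(#|T|, j)%:R :> R.
  by rewrite -!natrM mul_bin_left.
rewrite -(ler_pM2l (ltr0Sn R j)).
apply: (@le_trans _ _ ('C(#|T|, m)%:R * ((#|T| - j)%:R * layer h j))).
  by rewrite mulrCA ler_wpM2l // layer_succ_le.
apply: (@le_trans _ _ ((#|T| - j)%:R * ('C(#|T|, j)%:R * layer h m))).
  by rewrite mulrCA ler_wpM2l // IH // ltnW.
by rewrite mulrA -binS mulrA.
Qed.

Lemma Ebin_decreasing_le (p : R) h m : 0 <= p -> p <= 1 -> decreasing h ->
  (forall S, 0 <= h S <= 1) -> (m <= #|T|)%N ->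
  Ebin p (enum T) h <=
  Ebin p (enum T) (fun S => (#|S| < m)%:R) + layer h m / 'C(#|T|, m)%:R.
Proof.
move=> p_ge0 p_le1 dh h01 le_mT.
set A := layer h m / 'C(#|T|, m)%:R.
have binm_gt0 : 0 < 'C(#|T|, m)%:R :> R by rewrite ltr0n bin_gt0.
have A_ge0 : 0 <= A.
  by apply: divr_ge0; [apply: sumr_ge0 => S _; case/andP: (h01 S) | exact: ltW].
have layer_le k :
    (m <= k)%N -> (k < #|T|.+1)%N -> layer h k <= 'C(#|T|, k)%:R * A.
  move=> le_mk lt_kT; rewrite /A mulrA ler_pdivlMr // mulrC.
  by apply: layer_binom_le; rewrite ?le_mk.
have weights1 :
    \sum_(k < #|T|.+1) p ^+ k * (1 - p) ^+ (#|T| - k) * 'C(#|T|, k)%:R = 1.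
  rewrite -[RHS](expr1n R #|T|) -[1 in RHS](subrK p 1) exprDn.
  by apply: eq_bigr => k _; rewrite mulr_natr (mulrC (p ^+ k)).
apply: (@le_trans _ _ (Ebin p (enum T) (fun S =>
           (#|S| < m)%:R + (m <= #|S|)%:R * h S))).
  apply: ler_Ebin => // S; have /andP[h_ge0 h_le1] := h01 S.
  by case: ltnP => _ /=; rewrite ?mul0r ?mul1r ?addr0 ?add0r.
rewrite EbinD lerD2l Ebin_layers -[leRHS]mul1r -[X in X * A]weights1 mulr_suml.
apply: ler_sum => k _.
rewrite -[leRHS]mulrA ler_wpM2l ?mulr_ge0 ?exprn_ge0 ?subr_ge0 //.
rewrite /layer (eq_bigr (fun S => (m <= k)%:R * h S)); last by move=> S /eqP ->.
rewrite -mulr_sumr; case: leqP => [le_mk|_] /=; last by rewrite mul0r; apply: mulr_ge0.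
by rewrite mul1r layer_le.
Qed.

End Layers.

Lemma unif_probE {R : realType} {T : finType} m (E : pred {set T}) :
  unif_prob R m E = layer (fun S => (E S)%:R) m / 'C(#|T|, m)%:R.
Proof.
rewrite /unif_prob /msubsets card_draws layer_indicator.
by congr (_%:R / _); apply: eq_card => S; rewrite !finset.inE.
Qed.

Lemma decreasing_avoid_all {R : realType} {T I : finType} (B : I -> {set T}) :
  decreasing (fun S => (avoid_all B S)%:R : R).
Proof.
move=> S S' sub; have [avoidS'|_] := boolP (avoid_all B S'); last exact: ler0n.
suff -> : avoid_all B S by [].
apply/forallP => i; apply: contraNN (forallP avoidS' i) => BS.
exact: fintype.subset_trans BS sub.
Qed.

Lemma Ebin_card_lt_expR {R : realType} {T : finType} (p eta : R) (m : nat) :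
  0 < eta -> eta < 1 -> 0 <= p -> p <= 1 -> #|T|%:R * p = (1 + eta) * m%:R ->
  Ebin p (enum T) (fun S => (#|S| < m)%:R) <= expR (- (eta ^+ 2 * m%:R / 4)).
Proof.
move=> eta_gt0 eta_lt1 p_ge0 p_le1 np.
set u := eta / 2; set t := expR (- u).
have t_gt0 : 0 < t := expR_gt0 _.
have t_le1 : t <= 1 by rewrite expR_le1 /u; lra.
apply: le_trans (Ebin_card_lt _ p_ge0 p_le1 _ m t_gt0 t_le1) _.
have base : p * t + (1 - p) <= expR (- (p * (1 - t))).
  by have := expR_ge1Dx (- (p * (1 - t))); lra.
have base_ge0 : 0 <= p * t + (1 - p) by nra.
have -> : t ^+ m = expR (m%:R * - u) by rewrite expRM_natl.
apply: (@le_trans _ _ (expR (#|T|%:R * - (p * (1 - t))) / expR (m%:R * - u))).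
  rewrite ler_wpM2r ?invr_ge0 ?expR_ge0 // expRM_natl.
  by apply: lerXn2r; rewrite ?nnegrE ?expR_ge0.
rewrite -expRB ler_expR mulrN mulrA np.
have u_ge0 : 0 <= u by rewrite /u; lra.
have key : eta ^+ 2 / 4 <= (1 + eta) * (1 - t) - u.
  by have := one_sub_expRN_ge _ u_ge0; rewrite -/t /u; nra.
have m_ge0 : 0 <= m%:R :> R by [].
nra.
Qed.

Theorem lemma3p2 (Rr : realType) (Omega I : finType) (B : I -> {set Omega})
  (m : nat) (hm : (m <= #|Omega| %/ 2)%N) (eta : Rr)
  (heta0 : 0 < eta) (heta1 : eta < 1) :
  \prod_(i : I) (1 - ((1 + eta) * m%:R / #|Omega|%:R) ^+ #|B i|)
    - expR (- (eta ^+ 2 * m%:R / 4))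
  <= unif_prob Rr m (avoid_all B).
Proof.
set n := #|Omega|; set p := (1 + eta) * m%:R / n%:R.
have le_2m_n : (m * 2 <= n)%N by rewrite -leq_divRL.
have [/andP[p_ge0 p_le1] np] : (0 <= p <= 1) /\ n%:R * p = (1 + eta) * m%:R.
  have [n0|n_gt0] := posnP n.
    have m0 : m = 0%N by move: le_2m_n; rewrite n0; lia.
    by rewrite /p m0 n0 !(mulr0, mul0r) lexx ler01.
  have n_gt0R : 0 < n%:R :> Rr by rewrite ltr0n.
  have le_mnR : (1 + eta) * m%:R <= n%:R.
    by move: le_2m_n; rewrite -(ler_nat Rr) natrM; nra.
  split; last by rewrite /p mulrCA mulfV ?gt_eqF // mulr1.
  rewrite /p ler_pdivrMr // mul1r le_mnR andbT.
  by apply: divr_ge0; [apply: mulr_ge0 => //; lra | exact: ltW].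
have avoid01 S : 0 <= ((avoid_all B S)%:R : Rr) <= 1 by rewrite ler0n lern1 leq_b1.
have le_mn : (m <= n)%N by apply: leq_trans le_2m_n; rewrite leq_pmulr.
have := Ebin_avoid_all _ p_ge0 p_le1 _ B.
have := Ebin_decreasing_le _ _ _ p_ge0 p_le1 (decreasing_avoid_all B) avoid01 le_mn.
have := Ebin_card_lt_expR _ _ _ heta0 heta1 p_ge0 p_le1 np.
rewrite unif_probE; lra.
Qed.
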